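(* Let $G=(V,E)$ be a simple graph with $V=\{1,\dots,n\}$ and let $\mathrm{SOL}(G)$ be the solution set of $\mathrm{LCP}(A+I,-\mathbf{e})$. Then: (a) $0\notin\mathrm{SOL}(G)$; (b) $(A+I)x\geq x$ for all $x\in\mathrm{SOL}(G)$; (c) $\mathrm{SOL}(G)\subseteq[0,1]^n$; (d) if $G$ is the disjoint union of graphs $G_1$ and $G_2$ (no edges between them), then, ordering coordinates so that those of $G_1$ come first, $\mathrm{SOL}(G)=\mathrm{SOL}(G_1)\times\mathrm{SOL}(G_2)$; (e) if $x\in\mathrm{SOL}(G)$, then $\sigma(x)$ is a dominating set of $G$; (f) if $x\in\mathrm{SOL}(G)$, then the subvector $\hat x:=x_{\sigma(x)}$ belongs to $\mathrm{SOL}(G_{\sigma(x)})$ and $\sigma(\hat x)=V(G_{\sigma(x)})$.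
   Context: $A$ is the adjacency matrix of $G$, $I$ the $n\times n$ identity and $\mathbf{e}$ the all-ones vector. $x$ solves $\mathrm{LCP}(A+I,-\mathbf{e})$ iff $x\geq 0$, $(A+I)x\geq\mathbf{e}$ and $x^\top((A+I)x-\mathbf{e})=0$. For a graph $H$, $\mathrm{SOL}(H)$ denotes the solution set of $\mathrm{LCP}(A_H+I,-\mathbf{e})$ with $A_H$ its adjacency matrix. The support of $x$ is $\sigma(x):=\{i\in V\mid x_i>0\}$. For $S\subseteq V$, $G_S$ is the subgraph induced by $S$ and $x_S$ the subvector of $x$ indexed by $S$. A set $S\subseteq V$ is dominating if every vertex outside $S$ has a neighbour in $S$. *)

From HB Require Import structures.
From mathcomp Require Import all_boot all_order all_algebra.
From mathcomp Require Import reals.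
Set Implicit Arguments. Unset Strict Implicit. Unset Printing Implicit Defensive.
Import Order.TTheory GRing.Theory Num.Theory.
Local Open Scope ring_scope.

Section Defs.
Variable R : realType.
Variable V : finType.

Definition simple_graph (e : rel V) : Prop :=
  symmetric e /\ irreflexive e.

Definition adjmat (e : rel V) : V -> V -> R := fun i j => (e i j)%:R.
Definition idmat : V -> V -> R := fun i j => (i == j)%:R.
Definition addmat (M N : V -> V -> R) : V -> V -> R := fun i j => M i j + N i j.
Definition mulmv (M : V -> V -> R) (x : V -> R) : V -> R :=
  fun i => \sum_(j : V) M i j * x j.
Definition onesv : V -> R := fun _ => 1.

Definition LCP_sol (M : V -> V -> R) (q : V -> R) (x : V -> R) : Prop :=
  [/\ forall i, 0 <= x i,
      forall i, 0 <= mulmv M x i + q i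
    & \sum_(i : V) x i * (mulmv M x i + q i) = 0].

Definition SOL (e : rel V) (x : V -> R) : Prop :=
  LCP_sol (addmat (adjmat e) idmat) (fun i => - onesv i) x.

Definition supp (x : V -> R) : {set V} := [set i | 0 < x i].

Definition dominating (e : rel V) (S : {set V}) : Prop :=
  forall v, v \notin S -> exists2 u, u \in S & e v u.

End Defs.

Definition induced (V : finType) (e : rel V) (S : {set V}) : rel {v : V | v \in S} :=
  fun u w => e (val u) (val w).

Definition subvec (R : Type) (V : finType) (x : V -> R) (S : {set V})
  : {v : V | v \in S} -> R := fun u => x (val u).

Arguments induced [V] e S _ _.
Arguments subvec [R V] x S _.

From HB Require Import structures.
From mathcomp Require Import all_boot all_order all_algebra.
From mathcomp Require Import reals.
Import Order.TTheory GRing.Theory Num.Theory.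
Local Open Scope ring_scope.

(* All six facts are read off the pointwise form of the complementarity
   conditions: x_i >= 0, x_i + sum_{j ~ i} x_j >= 1, and x_i = 0 unless
   x_i + sum_{j ~ i} x_j = 1.  The neighbour sum is nonnegative, so (A+I)x >= x
   and x_i <= 1; a vertex with x_i = 0 needs a neighbour with x_j > 0.
   Restricting to a vertex set S leaves every row of (A+I)x indexed by S
   unchanged as soon as no neighbour outside S carries weight, which covers both
   disjoint unions and the restriction to the support. *)

Section LCPGraph.
Variable R : realType.

Notation MI e := (addmat (@adjmat R _ e) (@idmat R _)).

Lemma SOL_pointwise (T : finType) (e : rel T) (x : T -> R) :
  SOL e x <-> forall i, [/\ 0 <= x i, 1 <= mulmv (MI e) x i
                          & x i * (mulmv (MI e) x i - 1) = 0].
Proof.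
rewrite /SOL /LCP_sol /onesv; split.
  case=> x_ge0 Mx_ge1 /eqP; rewrite psumr_eq0 => [/allP compl i|i _].
    by rewrite -subr_ge0 x_ge0 Mx_ge1; split=> //; apply/eqP/compl/mem_index_enum.
  exact: mulr_ge0.
move=> H; split=> [i|i|]; first by case: (H i).
  by case: (H i) => _; rewrite subr_ge0.
by apply: big1 => i _; case: (H i).
Qed.

Lemma mulmv_adjI (T : finType) (e : rel T) (x : T -> R) i :
  mulmv (MI e) x i = x i + \sum_j (e i j)%:R * x j.
Proof.
rewrite /mulmv /addmat /adjmat /idmat.
under eq_bigr do rewrite mulrDl.
rewrite big_split /= addrC; congr (_ + _).
rewrite (bigD1 i) //= eqxx mul1r big1 ?addr0 // => j /negbTE.
by rewrite eq_sym => ->; rewrite mul0r.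
Qed.

Section OneGraph.
Variables (T : finType) (e : rel T).

Lemma nbr_sum_ge0 (x : T -> R) i :
  (forall j, 0 <= x j) -> 0 <= \sum_j (e i j)%:R * x j.
Proof. by move=> x_ge0; apply: sumr_ge0 => j _; apply: mulr_ge0. Qed.

Lemma SOL_neq0 : (0 < #|T|)%N -> ~ SOL (R:=R) e (fun _ => 0).
Proof.
case/card_gt0P=> i _ /SOL_pointwise /(_ i) [_ + _].
by rewrite mulmv_adjI big1 ?add0r ?ler10 // => j _; rewrite mulr0.
Qed.

Lemma SOL_le_mulmv (x : T -> R) i : SOL e x -> x i <= mulmv (MI e) x i.
Proof.
move/SOL_pointwise=> H; rewrite mulmv_adjI lerDl.
by apply: nbr_sum_ge0 => j; case: (H j).
Qed.

Lemma SOL_le1 (x : T -> R) i : SOL e x -> 0 <= x i <= 1.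
Proof.
move=> solx; have /SOL_pointwise/(_ i) [-> _ /eqP] := solx.
rewrite mulf_eq0 subr_eq0 => /orP[/eqP->|/eqP <-]; first exact: ler01.
exact: SOL_le_mulmv.
Qed.

Lemma SOL_notin_supp {x : T -> R} {i} : SOL e x -> i \notin supp x -> x i = 0.
Proof.
move/SOL_pointwise/(_ i)=> [x_ge0 _ _]; rewrite inE -leNgt => x_le0.
by apply/eqP; rewrite eq_le x_le0 x_ge0.
Qed.

Lemma SOL_dominating (x : T -> R) : SOL e x -> dominating e (supp x).
Proof.
move=> solx v /(SOL_notin_supp solx) xv.
have [u /andP[u_supp evu]|no_nbr] := pickP [pred u | (u \in supp x) && e v u].
  by exists u.
have /SOL_pointwise/(_ v) [_ + _] := solx.
rewrite mulmv_adjI xv add0r big1 ?ler10 // => j _.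
have := no_nbr j; rewrite /= andbC; case: (e v j) => /= [j_out|]; last first.
  by rewrite mul0r.
by rewrite (SOL_notin_supp solx) ?j_out ?mulr0.
Qed.

Lemma mulmv_induced (S : {set T}) (x : T -> R) (i : {v : T | v \in S}) :
  (forall j, j \notin S -> (e (val i) j)%:R * x j = 0) ->
  mulmv (MI (induced e S)) (subvec x S) i = mulmv (MI e) x (val i).
Proof.
move=> out0; rewrite !mulmv_adjI /subvec; congr (_ + _).
rewrite [RHS](bigID (mem S)) /= [X in _ + X]big1 ?addr0; last exact: out0.
exact/esym/(big_sub S (fun j => (e (val i) j)%:R * x j)).
Qed.

Lemma SOL_induced (S : {set T}) (x : T -> R) :
  (forall i j, i \in S -> j \notin S -> (e i j)%:R * x j = 0) ->
  (forall i, i \in S -> [/\ 0 <= x i, 1 <= mulmv (MI e) x i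
                          & x i * (mulmv (MI e) x i - 1) = 0]) ->
  SOL (induced e S) (subvec x S).
Proof.
move=> out0 H; apply/SOL_pointwise => u.
by rewrite mulmv_induced => [|j]; [exact: H (valP u) | exact: out0 (valP u)].
Qed.

Lemma SOL_disjoint_union (S : {set T}) (x : T -> R) :
  symmetric e -> (forall u v, u \in S -> v \notin S -> ~~ e u v) ->
  SOL e x <->
  SOL (induced e S) (subvec x S) /\ SOL (induced e (~: S)) (subvec x (~: S)).
Proof.
move=> esym noedge.
have cut_in i j : i \in S -> j \notin S -> (e i j)%:R * x j = 0.
  by move=> iS jS; rewrite (negbTE (noedge _ _ iS jS)) mul0r.
have cut_out i j : i \in ~: S -> j \notin ~: S -> (e i j)%:R * x j = 0.
  by rewrite !inE negbK esym => iS jS; rewrite (negbTE (noedge _ _ jS iS)) mul0r.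
split=> [/SOL_pointwise H | [/SOL_pointwise H1 /SOL_pointwise H2]].
  by split; apply: SOL_induced => // i _; apply: H.
apply/SOL_pointwise => i; have [iS|iS] := boolP (i \in S).
  by have := H1 (exist _ i iS); rewrite mulmv_induced // => j; apply: cut_in.
have iS' : i \in ~: S by rewrite inE.
by have := H2 (exist _ i iS'); rewrite mulmv_induced // => j; apply: cut_out.
Qed.

Lemma SOL_restrict_supp (x : T -> R) :
  SOL e x -> SOL (induced e (supp x)) (subvec x (supp x)).
Proof.
move=> solx; apply: SOL_induced => [i j _ /(SOL_notin_supp solx) ->|i _].
  by rewrite mulr0.
by move/SOL_pointwise: solx.
Qed.

End OneGraph.

Lemma supp_subvec_supp (T : finType) (x : T -> R) :
  supp (subvec x (supp x)) = [set: {v : T | v \in supp x}].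
Proof. by apply/setP => u; rewrite !inE /subvec; have := valP u; rewrite inE. Qed.

End LCPGraph.

Theorem lemma1 (R : realType) (V : finType) (e : rel V) :
  simple_graph e -> (0 < #|V|)%N ->
  (* (a) *) ~ SOL (R:=R) e (fun _ => 0) /\
      (* (b) *) (forall x : V -> R, SOL e x ->
                   forall i, x i <= mulmv (addmat (@adjmat R V e) (@idmat R V)) x i) /\
      (* (c) *) (forall x : V -> R, SOL e x -> forall i, 0 <= x i <= 1) /\
      (* (d) *) (forall S : {set V},
                   (forall u v, u \in S -> v \notin S -> ~~ e u v) ->
                   forall x : V -> R,
                     SOL e x <->
                     SOL (induced e S) (subvec x S) /\
                     SOL (induced e (~: S)) (subvec x (~: S))) /\
      (* (e) *) (forall x : V -> R, SOL e x -> dominating e (supp x)) /\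
      (* (f) *) (forall x : V -> R, SOL e x ->
                   SOL (induced e (supp x)) (subvec x (supp x)) /\
                   supp (subvec x (supp x)) = [set: {v : V | v \in supp x}]).
Proof.
move=> [esym _] V_gt0.
split; first exact: SOL_neq0.
split; first by move=> x solx i; exact: SOL_le_mulmv solx.
split; first by move=> x solx i; exact: SOL_le1 solx.
split; first by move=> S noedge x; apply: SOL_disjoint_union.
split; first exact: SOL_dominating.
by move=> x solx; split; [apply: SOL_restrict_supp | apply: supp_subvec_supp].
Qed.
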